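(* Let $P$ be a finite poset and $q$ a positive integer. For every $f\in\mathrm{Inc}^q(P)$, $\mathrm{JdtPro}(f)\in\mathrm{Inc}^q(P)$.
   Context: $\mathrm{Inc}^q(P)$ is the set of $f:P\to\{1,\dots,q\}$ with $p_1<p_2\Rightarrow f(p_1)<f(p_2)$. For labelings $g:P\to\mathbb{Z}\cup\{\square\}$, the slide $\sigma_i$ is defined (simultaneously at all $x$, using the values of $g$) by $\sigma_i(g)(x)=i$ if $g(x)=\square$ and $g(y)=i$ for some $y\gtrdot x$; $\sigma_i(g)(x)=\square$ if $g(x)=i$ and $g(z)=\square$ for some $z\lessdot x$; $\sigma_i(g)(x)=g(x)$ otherwise. $\sigma_{a\to b}$ replaces every label $a$ by $b$. $jdt(f)=\sigma_{\square\to q+1}\circ\sigma_q\circ\cdots\circ\sigma_2\circ\sigma_{1\to\square}(f)$ and $\mathrm{JdtPro}(f)(x)=jdt(f)(x)-1$. *)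

From HB Require Import structures.
From mathcomp Require Import all_boot all_order all_algebra.
Set Implicit Arguments. Unset Strict Implicit. Unset Printing Implicit Defensive.
Import Order.TTheory GRing.Theory Num.Theory.

Section JdtPro.
Context {disp : Order.disp_t} {P : finPOrderType disp}.

Definition covers (x y : P) : bool :=
  ((x < y)%O && [forall z : P, ~~ ((x < z)%O && (z < y)%O)]).

Definition Inc (q : nat) (f : P -> int) : Prop :=
  (forall p : P, (1 <= f p)%R /\ (f p <= Posz q)%R) /\
  (forall p1 p2 : P, (p1 < p2)%O -> (f p1 < f p2)%R).

(* Labelings P -> Z ∪ {□}; the box □ is represented by None. *)
Definition labeling := P -> option int.

(* The slide σ_i, computed simultaneously at all x from the values of g. *)
Definition slide (i : int) (g : labeling) : labeling := fun x =>
  if (g x == None) && [exists y : P, covers x y && (g y == Some i)] then Some i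
  else if (g x == Some i) && [exists z : P, covers z x && (g z == None)] then None
  else g x.

Definition relabel (a b : option int) (g : labeling) : labeling := fun x =>
  if g x == a then b else g x.

(* σ_q ∘ ... ∘ σ_2 ∘ σ_{1 -> □}(f) : σ_2 is applied first. *)
Definition jdt_slides (q : nat) (f : P -> int) : labeling :=
  foldl (fun g (i : nat) => slide (Posz i) g)
        (relabel (Some 1%R) None (fun x => Some (f x)))
        (iota 2 q.-1).

(* jdt(f) = σ_{□ -> q+1}(...) : every remaining box becomes q+1; the result
   has no boxes, so it is an honest map P -> Z. *)
Definition jdt (q : nat) (f : P -> int) : P -> int := fun x =>
  odflt (Posz q.+1) (jdt_slides q f x).

Definition JdtPro (q : nat) (f : P -> int) : P -> int := fun x =>
  (jdt q f x - 1)%R.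

End JdtPro.

(** Doubling the labels, read a box present after σ_2, …, σ_j as the
    half-integer j + 1/2, i.e. as 2j+1 among the even numbers 2k.  The
    slide σ_(j+1) only touches the values 2j+1 and 2j+2, sending both into
    {2j+2, 2j+3}; a box below a label j+1 with nothing strictly between is
    exactly a covering pair, and the slide swaps it.  Hence the doubled
    labeling stays strictly increasing, and at the end (j = q) reading boxes
    as q+1 and subtracting 1 gives a strictly increasing map into [1, q]. *)
From mathcomp Require Import all_boot all_order all_algebra.
From mathcomp Require Import zify.
Import Order.TTheory GRing.Theory Num.Theory.

Set Implicit Arguments.
Unset Strict Implicit.
Unset Printing Implicit Defensive.

Section JdtProInc.
Context {disp : Order.disp_t} {P : finPOrderType disp}.
Implicit Types (g : @labeling disp P) (x y : P) (i k : int).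

Lemma covers_of_gap (h : P -> int) x y :
  {homo h : a b / (a < b)%O >-> (a < b)%R} ->
  (x < y)%O -> h y = (h x + 1)%R -> covers x y.
Proof.
move=> h_mono lt_xy hy; rewrite /covers lt_xy /=.
apply/forallP => z; apply/negP => /andP [/h_mono lt_xz /h_mono lt_zy]; lia.
Qed.

Lemma slide_id i g x : g x != None -> g x != Some i -> slide i g x = g x.
Proof. by rewrite /slide => /negbTE-> /negbTE->. Qed.

Lemma slide_window i g x :
  g x \in [:: None; Some i] -> slide i g x \in [:: None; Some i].
Proof.
by rewrite /slide !inE => /orP [] /eqP ->; do ![case: ifP]; rewrite ?eqxx.
Qed.

Lemma slide_box_up i g x y :
  covers x y -> g x = None -> g y = Some i -> slide i g x = Some i.
Proof.
move=> cov_xy gx gy; rewrite /slide gx /=.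
suff -> : [exists y, covers x y && (g y == Some i)] by [].
by apply/existsP; exists y; rewrite cov_xy gy eqxx.
Qed.

Lemma slide_label_down i g x y :
  covers x y -> g x = None -> g y = Some i -> slide i g y = None.
Proof.
move=> cov_xy gx gy; rewrite /slide gy eqxx /=.
suff -> : [exists z, covers z y && (g z == None)] by [].
by apply/existsP; exists x; rewrite cov_xy gx eqxx.
Qed.

Definition dlabel (j : nat) g x : int :=
  if g x is Some k then (2 * k)%R else Posz (2 * j + 1).

Lemma dlabel_box_or_even j g x :
  dlabel j g x = Posz (2 * j + 1) \/ exists k, dlabel j g x = (2 * k)%R.
Proof. by rewrite /dlabel; case: (g x) => [k|]; [right; exists k | left]. Qed.

Lemma dlabel_eq_box j g x : dlabel j g x = Posz (2 * j + 1) -> g x = None.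
Proof. by rewrite /dlabel; case: (g x) => // k; lia. Qed.

Lemma dlabel_eq_even j g x k : dlabel j g x = (2 * k)%R -> g x = Some k.
Proof. by rewrite /dlabel; case: (g x) => [k' e|]; [congr Some | ]; lia. Qed.

Lemma dlabel_slide_id j g x :
  dlabel j g x != Posz (2 * j + 1) -> dlabel j g x != Posz (2 * j + 2) ->
  dlabel j.+1 (slide (Posz j.+1) g) x = dlabel j g x.
Proof.
rewrite /dlabel; case gx: (g x) => [k|]; last by rewrite eqxx.
move=> _ ne_k; rewrite slide_id gx //.
by apply/eqP => -[ek]; move: ne_k; rewrite ek; lia.
Qed.

Lemma dlabel_slide_window j g x :
  dlabel j g x = Posz (2 * j + 1) \/ dlabel j g x = Posz (2 * j + 2) ->
  dlabel j.+1 (slide (Posz j.+1) g) x = Posz (2 * j + 2) \/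
  dlabel j.+1 (slide (Posz j.+1) g) x = Posz (2 * j + 3).
Proof.
move=> window.
have : g x \in [:: None; Some (Posz j.+1)].
  rewrite !inE; case: window => [/dlabel_eq_box | ew].
    by move->.
  have ev : dlabel j g x = (2 * Posz j.+1)%R by rewrite ew; lia.
  by rewrite (dlabel_eq_even ev) eqxx orbT.
move/slide_window; rewrite /dlabel !inE => /orP [] /eqP ->; lia.
Qed.

Variable q : nat.

Definition jdt_invariant (j : nat) g : Prop :=
  (forall x k, g x = Some k -> (2 <= k)%R /\ (k <= Posz q)%R) /\
  {homo dlabel j g : x y / (x < y)%O >-> (x < y)%R}.

Lemma jdt_invariant_slide j g :
  (0 < j)%N -> (j < q)%N -> jdt_invariant j g ->
  jdt_invariant j.+1 (slide (Posz j.+1) g).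
Proof.
move=> j_gt0 j_ltq [g_range g_mono]; split.
  move=> x k; rewrite /slide.
  by case: ifP => _; [case=> <-; lia | case: ifP => _ //; exact: g_range].
move=> x y lt_xy; have lt_g := g_mono _ _ lt_xy.
have [/andP [/eqP gx /eqP gy] | not_swap] := boolP
  ((dlabel j g x == Posz (2 * j + 1)) && (dlabel j g y == Posz (2 * j + 2))).
  have cov_xy : covers x y by apply: (covers_of_gap g_mono lt_xy); lia.
  have gx_box := dlabel_eq_box gx.
  have gy_lab : g y = Some (Posz j.+1) by apply: (dlabel_eq_even (j := j)); lia.
  rewrite /dlabel (slide_box_up cov_xy gx_box gy_lab).
  by rewrite (slide_label_down cov_xy gx_box gy_lab); lia.
have := @dlabel_slide_id j g x; have := @dlabel_slide_window j g x.
have := @dlabel_slide_id j g y; have := @dlabel_slide_window j g y.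
by case: (dlabel_box_or_even j g y) => [y_box | [k y_even]]; lia.
Qed.

Lemma jdt_invariant_slides j n g :
  (0 < j)%N -> (j + n <= q)%N -> jdt_invariant j g ->
  jdt_invariant (j + n)
    (foldl (fun g (i : nat) => slide (Posz i) g) g (iota j.+1 n)).
Proof.
elim: n j g => [|n IH] j g j_gt0 jn_le inv_g; first by rewrite addn0.
rewrite /= -addSnnS; apply: IH => //; first lia.
by apply: jdt_invariant_slide => //; lia.
Qed.

Lemma jdt_invariant_start f :
  Inc q f -> jdt_invariant 1 (relabel (Some 1%R) None (fun x => Some (f x))).
Proof.
rewrite /relabel => -[f_range f_mono]; split.
  move=> x k; case: eqP => // ne1 [<-].
  have fx_ne1 : f x <> 1%R by move=> fx1; apply: ne1; rewrite fx1.
  by have := f_range x; lia.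
move=> x y /f_mono; have := f_range x; have := f_range y; rewrite /dlabel.
by case: eqP => [[]|_]; case: eqP => [[]|_] /=; lia.
Qed.

Lemma jdt_invariant_Inc g :
  (0 < q)%N -> jdt_invariant q g ->
  Inc q (fun x => (odflt (Posz q.+1) (g x) - 1)%R).
Proof.
move=> q_gt0 [g_range g_mono]; split.
  move=> x; case gx: (g x) => [k|] /=; last lia.
  by have := g_range _ _ gx; lia.
move=> x y /g_mono; rewrite /dlabel.
case: (g x) => [k|]; case gy: (g y) => [l|] /=; try lia.
by have := g_range _ _ gy; lia.
Qed.

End JdtProInc.

Theorem proposition3p4 (d : Order.disp_t) (P : finPOrderType d) (q : nat)
  (hq : (0 < q)%N) (f : P -> int) :
  Inc q f -> Inc q (JdtPro q f).
Proof.
move=> inc_f; apply: jdt_invariant_Inc => //.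
have q_eq : (1 + q.-1)%N = q by rewrite add1n prednK.
have := jdt_invariant_slides (j := 1) (n := q.-1) isT (eq_leq q_eq)
  (jdt_invariant_start inc_f).
by rewrite q_eq; apply.
Qed.
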